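(* Let $\Gamma$ be a finite simplicial graph in which all equivalence classes are abelian. If $\Gamma$ has a SIL, then it has a special SIL.
   Context: $\mathrm{lk}(u)$ = neighbours of $u$, $\mathrm{st}(u)=\mathrm{lk}(u)\cup\{u\}$; $u\le v$ iff $\mathrm{lk}(u)\subseteq\mathrm{st}(v)$; $u\sim v$ iff $u\le v\le u$; class $[u]$; a class is abelian if its vertices are pairwise adjacent. A SIL is a triple $(x,y\mid z)$ of pairwise non-adjacent vertices such that the component of $\Gamma\setminus(\mathrm{lk}(x)\cap\mathrm{lk}(y))$ containing $z$ contains neither $x$ nor $y$. $\mathbb{A}_\Lambda$ is the right-angled Artin group of a graph $\Lambda$; for an induced subgraph it is identified with the subgroup generated by its vertices. $\mathrm{Out}^0(\mathbb{A}_\Lambda)$ is the subgroup of $\mathrm{Out}(\mathbb{A}_\Lambda)$ generated by transvections ($v\mapsto wv$ or $v\mapsto vw$ for $v\le w$, $v\neq w$) and partial conjugations ($z\mapsto vzv^{-1}$ for $z$ in a union of components of $\Lambda\setminus\mathrm{st}(v)$). For a SIL $S=(x_1,x_2\mid x_3)$, let $\Gamma_S$ be the subgraph induced on $[x_1]\cup[x_2]\cup[x_3]$ and $\Gamma_{\le S}$ the subgraph induced on $\{u: u\le x_i\text{ for some } i\}$. The epimorphism $\mathbb{A}_\Gamma\to\mathbb{A}_{\Gamma_{\le S}}$ killing all vertices outside $\Gamma_{\le S}$ induces a homomorphism $\mathrm{Fact}:\mathrm{Out}^0(\mathbb{A}_\Gamma)\to\mathrm{Out}^0(\mathbb{A}_{\Gamma_{\le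 S}})$. The SIL $S$ is special if each $[x_i]$ is abelian and every element of the image of $\mathrm{Fact}$ preserves the conjugacy class of the subgroup $\mathbb{A}_{\Gamma_S}$. *)

From mathcomp Require Import all_boot.
Set Implicit Arguments. Unset Strict Implicit. Unset Printing Implicit Defensive.

(* A finite simplicial graph: vertex type T : finType, adjacency e : rel T,
   assumed symmetric and irreflexive (hypotheses of the theorem). *)

Section Graph.
Variables (T : finType) (e : rel T).

Definition lk (u : T) : {set T} := [set w | e u w].
Definition st (u : T) : {set T} := u |: lk u.
Definition vle (u v : T) : bool := lk u \subset st v.
Definition vsim (u v : T) : bool := vle u v && vle v u.
Definition vclass (u : T) : {set T} := [set w | vsim u w].
Definition abelian_class (u : T) : Prop :=
  forall a b, a \in vclass u -> b \in vclass u -> a != b -> e a b.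

Definition erestr (X : {set T}) : rel T := fun a b => [&& e a b, a \notin X & b \notin X].

Definition SIL (x y z : T) : Prop :=
  [/\ [&& x != y, x != z & y != z],
      [&& ~~ e x y, ~~ e x z & ~~ e y z],
      ~~ connect (erestr (lk x :&: lk y)) z x &
      ~~ connect (erestr (lk x :&: lk y)) z y].

(* a letter (v, b) stands for v if b = false and v^-1 if b = true *)
Definition word := seq (T * bool).

Inductive weq : word -> word -> Prop :=
| weq_refl w : weq w w
| weq_sym w1 w2 : weq w1 w2 -> weq w2 w1
| weq_trans w1 w2 w3 : weq w1 w2 -> weq w2 w3 -> weq w1 w3
| weq_red s t a b : weq (s ++ (a, b) :: (a, ~~ b) :: t) (s ++ t)
| weq_comm s t a b c d : e a c ->
    weq (s ++ (a, b) :: (c, d) :: t) (s ++ (c, d) :: (a, b) :: t).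

Definition winv (w : word) : word := rev (map (fun p => (p.1, ~~ p.2)) w).

Definition wsubst (f : T -> word) (w : word) : word :=
  flatten (map (fun p => if p.2 then winv (f p.1) else f p.1) w).

Definition over (X : {set T}) (w : word) : bool := all (fun p => p.1 \in X) w.

(* elementary generators of Out^0 (and their inverses), as maps on generators *)
Inductive elem_aut : (T -> word) -> Prop :=
| transv_l (v w : T) (b : bool) : vle v w -> v != w ->
    elem_aut (fun u => if u == v then [:: (w, b); (v, false)] else [:: (u, false)])
| transv_r (v w : T) (b : bool) : vle v w -> v != w ->
    elem_aut (fun u => if u == v then [:: (v, false); (w, b)] else [:: (u, false)])
| partconj (v : T) (C : {set T}) (b : bool) :
    C \subset ~: st v ->
    (forall a c, a \in C -> connect (erestr (st v)) a c -> c \in C) ->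
    elem_aut (fun u => if u \in C then [:: (v, b); (u, false); (v, ~~ b)]
                       else [:: (u, false)]).

(* automorphisms (on generators) lying in the subgroup generated by the
   elementary ones; their classes form Out^0(A_Gamma) *)
Inductive aut0 : (T -> word) -> Prop :=
| aut0_id : aut0 (fun u => [:: (u, false)])
| aut0_comp f g : aut0 f -> elem_aut g -> aut0 (fun u => wsubst f (g u)).

Definition GammaS (x1 x2 x3 : T) : {set T} := vclass x1 :|: vclass x2 :|: vclass x3.
Definition GammaLeS (x1 x2 x3 : T) : {set T} :=
  [set u | [|| vle u x1, vle u x2 | vle u x3]].

Definition erase (X : {set T}) (w : word) : word := filter (fun p => p.1 \in X) w.

Definition Fact (x1 x2 x3 : T) (phi : T -> word) (w : word) : word :=
  erase (GammaLeS x1 x2 x3) (wsubst phi w).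

Definition preserves_conj (x1 x2 x3 : T) (phi : T -> word) : Prop :=
  exists g : word, over (GammaLeS x1 x2 x3) g /\
    (forall w, over (GammaS x1 x2 x3) w ->
       exists w', over (GammaS x1 x2 x3) w' /\
                  weq (Fact x1 x2 x3 phi w) (g ++ w' ++ winv g)) /\
    (forall w', over (GammaS x1 x2 x3) w' ->
       exists w, over (GammaS x1 x2 x3) w /\
                  weq (Fact x1 x2 x3 phi w) (g ++ w' ++ winv g)).

Definition special_SIL (x1 x2 x3 : T) : Prop :=
  [/\ SIL x1 x2 x3, abelian_class x1, abelian_class x2, abelian_class x3 &
      forall phi, aut0 phi -> preserves_conj x1 x2 x3 phi].

End Graph.

(* Take a SIL S = (x, y | z) minimising #|{u <= x}| + #|{u <= y}| + #|{u <= z}|, and let v lie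
   in Gamma_{<=S} but not in Gamma_S. If v <= z, then (x, y | v) is a smaller SIL; if v <= x,
   then (v, y | z) is not a SIL, and following a path that witnesses this produces a common
   neighbour of x and y, not adjacent to v, that is joined to z outside st v. Hence no vertex
   of Gamma_S lies below v, and all vertices of Gamma_S outside st v lie in one component of
   Gamma \ st v. With these two facts, every transvection and every partial conjugation, once
   the vertices outside the downward-closed set Gamma_{<=S} are killed, restricts on
   A_{Gamma_S} to an automorphism of A_{Gamma_S} followed by a conjugation. This property is
   preserved under composition, so it holds on all of Out^0. *)

From Stdlib Require Import Setoid Morphisms.
From Pilot Require Import Defs.
From mathcomp Require Import all_boot.
Set Implicit Arguments. Unset Strict Implicit. Unset Printing Implicit Defensive.

Lemma connect_invariant (T : finType) (r : rel T) (P : T -> Prop) a b :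
  P a -> (forall c d, P c -> r c d -> P d) -> connect r a b -> P b.
Proof.
move=> Pa P_step /connectP [p rp ->]; elim: p a Pa rp => [|c p IH] a Pa //= /andP [rac rp].
exact: IH (P_step _ _ Pa rac) rp.
Qed.

Lemma connect_rcons (T : finType) (r : rel T) a b c : connect r a b -> r b c -> connect r a c.
Proof. by move=> ab bc; apply: connect_trans ab (connect1 bc). Qed.

Lemma connect_first (T : finType) (r : rel T) a b : connect r a b -> a != b ->
  exists c, r a c /\ connect r c b.
Proof.
move=> /connectP [[|c p] /= rp ->]; first by rewrite eqxx.
by case/andP: rp => rac rp _; exists c; split; last by apply/connectP; exists p.
Qed.

Section Graphs.
Variables (T : finType) (e : rel T).
Hypothesis e_sym : symmetric e.

Lemma in_st u w : (w \in st e u) = (w == u) || e u w.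
Proof. by rewrite in_setU1 inE. Qed.

Lemma vle_st u v w : vle e u v -> e u w -> w \in st e v.
Proof. by move/subsetP=> uv Euw; apply: uv; rewrite inE. Qed.

Lemma vle_refl u : vle e u u.
Proof. by apply/subsetP => w; rewrite inE in_st => ->; rewrite orbT. Qed.

Lemma vle_trans u v w : vle e u v -> vle e v w -> vle e u w.
Proof.
move=> uv vw; apply/subsetP => a; rewrite inE => Eua.
have := vle_st uv Eua; rewrite in_st => /orP [/eqP Eav|Eva]; last exact: vle_st vw Eva.
subst a; rewrite in_st; have [//|Nvw /=] := eqVneq v w.
have := vle_st vw (etrans (e_sym v u) Eua); rewrite in_st => /orP [/eqP <-//|Ewu].
have := vle_st uv (etrans (e_sym u w) Ewu); rewrite in_st (eq_sym w) (negbTE Nvw) /= => Evw.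
by rewrite e_sym.
Qed.

Definition down_closed (L : {set T}) := forall u w, vle e u w -> w \in L -> u \in L.

Lemma erestr_sym X : symmetric (erestr e X).
Proof. by move=> a b; rewrite /erestr e_sym; case: (a \in X); rewrite /= ?andbT ?andbF. Qed.

End Graphs.

#[global] Hint Resolve weq_refl : core.

Section Words.
Variables (T : finType) (e : rel T).
Local Notation W := (weq e).
Implicit Types (w x y s t : word T) (f g : T -> word T) (X : {set T}).

#[global] Instance weq_Equivalence : Equivalence W.
Proof. split; [exact: weq_refl | exact: weq_sym | exact: weq_trans]. Qed.

Lemma weq_congr (F : word T -> word T) :
  (forall s t a b, W (F (s ++ (a, b) :: (a, ~~ b) :: t)) (F (s ++ t))) ->
  (forall s t a b c d, e a c ->
     W (F (s ++ (a, b) :: (c, d) :: t)) (F (s ++ (c, d) :: (a, b) :: t))) ->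
  forall x y, W x y -> W (F x) (F y).
Proof.
move=> Fred Fcomm x y.
elim=> {x y} [w|x y _ IH|x y z _ IH1 _ IH2|s t a b|s t a b c d Eac].
- reflexivity.
- by symmetry.
- exact: weq_trans IH1 IH2.
- exact: Fred.
- exact: Fcomm.
Qed.

Lemma weq_catl s x y : W x y -> W (s ++ x) (s ++ y).
Proof.
apply: (weq_congr (F := cat s)) => *; rewrite !catA; [exact: weq_red | exact: weq_comm].
Qed.

Lemma weq_catr t x y : W x y -> W (x ++ t) (y ++ t).
Proof.
apply: (weq_congr (F := cat^~ t)) => *; rewrite -!catA; [exact: weq_red | exact: weq_comm].
Qed.

#[global] Instance cat_weq_Proper : Proper (W ==> W ==> W) (@cat (T * bool)).
Proof. by move=> x y Exy s t Est; rewrite (weq_catr s Exy) (weq_catl y Est). Qed.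

#[global] Instance cons_weq_Proper p : Proper (W ==> W) (cons p).
Proof. exact: (weq_catl [:: p]). Qed.

Lemma weq_cancel a b t : W ((a, b) :: (a, ~~ b) :: t) t.
Proof. exact: (weq_red e [::]). Qed.

Lemma weq_cancelV a b t : W ((a, ~~ b) :: (a, b) :: t) t.
Proof. by rewrite -{2}[b]negbK weq_cancel. Qed.

Lemma winv_cat x y : winv (x ++ y) = winv y ++ winv x.
Proof. by rewrite /winv map_cat rev_cat. Qed.

Lemma winv_cons a b w : winv ((a, b) :: w) = winv w ++ [:: (a, ~~ b)].
Proof. by rewrite -cat1s winv_cat. Qed.

Lemma winvK : involutive (@winv T).
Proof.
move=> w; rewrite /winv map_rev revK -map_comp -[RHS]map_id.
by apply: eq_map => -[a b] /=; rewrite negbK.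
Qed.

Lemma weq_catV w : W (w ++ winv w) [::].
Proof.
elim: w => [|p w IH] //.
by rewrite -cat1s winv_cat catA -(catA _ w) IH cats0; case: p => a b; rewrite /= weq_cancel.
Qed.

Lemma weq_Vcat w : W (winv w ++ w) [::].
Proof. by have := weq_catV (winv w); rewrite winvK. Qed.

#[global] Instance winv_weq_Proper : Proper (W ==> W) (@winv T).
Proof.
apply: weq_congr => [s t a b|s t a b c d Eac]; rewrite !winv_cat !winv_cons -!catA /=.
  by rewrite negbK weq_cancel.
by symmetry; apply: weq_comm.
Qed.

Definition wcommute x y := W (x ++ y) (y ++ x).

Lemma wcommute_sym x y : wcommute x y -> wcommute y x.
Proof. by rewrite /wcommute => ->. Qed.

Lemma wcommute_Vl x y : wcommute x y -> wcommute (winv x) y.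
Proof.
rewrite /wcommute => xy.
transitivity (winv x ++ (y ++ x) ++ winv x); first by rewrite -catA weq_catV cats0.
by rewrite -xy !catA weq_Vcat.
Qed.

Lemma wcommute_Vr x y : wcommute x y -> wcommute x (winv y).
Proof. by move/wcommute_sym/wcommute_Vl/wcommute_sym. Qed.

Lemma wcommute_catl x y t : wcommute x t -> wcommute y t -> wcommute (x ++ y) t.
Proof. by rewrite /wcommute => xt yt; rewrite -catA yt !catA xt. Qed.

Lemma wcommute_letter a b c d : c \in st e a -> wcommute [:: (a, b)] [:: (c, d)].
Proof.
rewrite /wcommute in_st => /orP [/eqP ->|Eac]; last exact: (weq_comm [::] [::]).
by case: b; case: d => //=; rewrite ?weq_cancel ?weq_cancelV.
Qed.

Lemma wcommute_cons p x y : wcommute [:: p] y -> wcommute x y -> wcommute (p :: x) y.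
Proof. by rewrite -cat1s; apply: wcommute_catl. Qed.

Lemma wcommute_all x y :
  (forall p q, p \in x -> q \in y -> q.1 \in st e p.1) -> wcommute x y.
Proof.
elim: x => [|p x IHx] xy; first by rewrite /wcommute cats0.
apply: wcommute_cons; last by apply: IHx => p' q px; apply: xy; rewrite inE px orbT.
apply: wcommute_sym; elim: y {IHx} xy => [|q y IHy] xy; first by rewrite /wcommute cats0.
apply: wcommute_cons; last by apply: IHy => p' q' px qy; apply: xy; rewrite // inE qy orbT.
case: p q {IHy} xy => a b [c d] xy; apply/wcommute_sym/wcommute_letter.
by apply: (xy (a, b) (c, d)); rewrite mem_head.
Qed.

Lemma wcommute_conj h x y :
  wcommute x y -> wcommute (h ++ x ++ winv h) (h ++ y ++ winv h).
Proof.
rewrite /wcommute => xy.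
have conjM s t : W ((h ++ s ++ winv h) ++ h ++ t ++ winv h) (h ++ (s ++ t) ++ winv h).
  by rewrite -!catA (catA (winv h)) weq_Vcat.
by rewrite !conjM xy.
Qed.

Definition adj_commute f := forall u v, e u v -> wcommute (f u) (f v).

Lemma wsubst_cat f x y : wsubst f (x ++ y) = wsubst f x ++ wsubst f y.
Proof. by rewrite /wsubst map_cat flatten_cat. Qed.

Lemma wsubst_cons f a b w :
  wsubst f ((a, b) :: w) = (if b then winv (f a) else f a) ++ wsubst f w.
Proof. by []. Qed.

Lemma wsubst_winv f w : wsubst f (winv w) = winv (wsubst f w).
Proof.
elim: w => [|[a b] w IH] //.
by rewrite winv_cons wsubst_cat IH !wsubst_cons winv_cat /= cats0; case: b; rewrite ?winvK.
Qed.

Lemma wsubst_comp f g w : wsubst f (wsubst g w) = wsubst (fun u => wsubst f (g u)) w.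
Proof.
elim: w => [|[a b] w IH] //.
by rewrite !wsubst_cons wsubst_cat IH; case: b; rewrite ?wsubst_winv.
Qed.

Lemma wsubst_gen w : wsubst (fun u => [:: (u, false)]) w = w.
Proof. by elim: w => [|[a []] w IH] //; rewrite wsubst_cons IH. Qed.

Lemma wsubst_weq f x y : adj_commute f -> W x y -> W (wsubst f x) (wsubst f y).
Proof.
move=> fE; apply: weq_congr => [s t a b|s t a b c d Eac]; rewrite !wsubst_cat !wsubst_cons.
  by case: b; rewrite /= ?(catA (winv (f a))) ?(catA (f a)) ?weq_catV ?weq_Vcat.
have fac : wcommute (if b then winv (f a) else f a) (if d then winv (f c) else f c).
  by case: b; case: d;
    [apply/wcommute_Vl/wcommute_Vr | apply/wcommute_Vl | apply/wcommute_Vr | ]; exact: fE.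
by rewrite !catA -(catA _ (if b then _ else _)) fac catA.
Qed.

End Words.

Section Projection.
Variables (T : finType) (e : rel T).
Local Notation W := (weq e).
Implicit Types (w x y h : word T) (f g : T -> word T) (S L X : {set T}).

Lemma erase_cat X x y : erase X (x ++ y) = erase X x ++ erase X y.
Proof. exact: filter_cat. Qed.

Lemma erase_winv X w : erase X (winv w) = winv (erase X w).
Proof. by rewrite /erase /winv filter_rev filter_map. Qed.

Lemma erase_id X w : Defs.over X w -> erase X w = w.
Proof. by move/all_filterP. Qed.

Lemma over_erase X w : Defs.over X (erase X w).
Proof. exact: filter_all. Qed.

Lemma over_cat X x y : Defs.over X (x ++ y) = Defs.over X x && Defs.over X y.
Proof. exact: all_cat. Qed.

Lemma over_winv X w : Defs.over X (winv w) = Defs.over X w.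
Proof. by rewrite /Defs.over /winv all_rev all_map. Qed.

Lemma over_sub S X w : S \subset X -> Defs.over S w -> Defs.over X w.
Proof. by move/subsetP => SX; apply: sub_all => p /SX. Qed.

Lemma weq_erase X x y : W x y -> W (erase X x) (erase X y).
Proof.
apply: weq_congr => [s t a b|s t a b c d Eac]; rewrite !erase_cat /=.
  by case: (a \in X); rewrite ?weq_cancel.
by case: (a \in X); case: (c \in X) => //; apply: weq_comm.
Qed.

Definition kills_outside L f := forall u, u \notin L -> W (erase L (f u)) [::].

Lemma erase_wsubst_erase L f x :
  kills_outside L f -> W (erase L (wsubst f x)) (erase L (wsubst f (erase L x))).
Proof.
move=> fL; elim: x => [|[a b] x IH] //; rewrite [erase L (_ :: _)]/=.
case: ifP => aL; rewrite !wsubst_cons !erase_cat IH //.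
by case: b; rewrite ?erase_winv fL ?aL.
Qed.

Lemma erase_wsubst_weq L f x y : adj_commute e f -> kills_outside L f ->
  W (erase L x) (erase L y) -> W (erase L (wsubst f x)) (erase L (wsubst f y)).
Proof.
move=> fE fL xy; rewrite erase_wsubst_erase // (erase_wsubst_erase y) //.
exact/weq_erase/wsubst_weq.
Qed.

Lemma kills_outside_comp L f g : adj_commute e f -> kills_outside L f ->
  kills_outside L g -> kills_outside L (fun u => wsubst f (g u)).
Proof.
move=> fE fL gL u uL.
by rewrite (erase_wsubst_weq (y := [::]) fE fL) //; apply: gL.
Qed.

Definition conj_preserving S L f := exists h, Defs.over L h /\
  (forall w, Defs.over S w -> exists w', Defs.over S w' /\
     W (erase L (wsubst f w)) (h ++ w' ++ winv h)) /\
  (forall w', Defs.over S w' -> exists w, Defs.over S w /\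
     W (erase L (wsubst f w)) (h ++ w' ++ winv h)).

Lemma conj_preserving_id S L : S \subset L -> conj_preserving S L (fun u => [:: (u, false)]).
Proof.
move=> SL; exists [::]; split=> //.
by split=> w Sw; exists w; rewrite wsubst_gen erase_id ?cats0 //; apply: over_sub Sw.
Qed.

Lemma conj_preserving_comp S L f g : adj_commute e f -> kills_outside L f ->
  conj_preserving S L f -> conj_preserving S L g ->
  conj_preserving S L (fun u => wsubst f (g u)).
Proof.
move=> fE fL [k [Lk [f_to f_onto]]] [h [Lh [g_to g_onto]]].
pose F x := erase L (wsubst f x).
have conj_step w w1 w2 : W (erase L (wsubst g w)) (h ++ w1 ++ winv h) ->
    W (F w1) (k ++ w2 ++ winv k) ->
    W (erase L (wsubst (fun u => wsubst f (g u)) w)) ((F h ++ k) ++ w2 ++ winv (F h ++ k)).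
  move=> gw fw1; rewrite -wsubst_comp erase_wsubst_erase //.
  rewrite (weq_erase L (wsubst_weq fE gw)) !wsubst_cat !erase_cat wsubst_winv erase_winv.
  by rewrite -/(F w1) fw1 winv_cat -!catA.
exists (F h ++ k); split; first by rewrite over_cat over_erase.
split=> [w Sw | w2 Sw2].
- have [w1 [Sw1 gw]] := g_to w Sw; have [w2 [Sw2 fw1]] := f_to w1 Sw1.
  by exists w2; split; last exact: conj_step gw fw1.
- have [w1 [Sw1 fw1]] := f_onto w2 Sw2; have [w [Sw gw]] := g_onto w1 Sw1.
  by exists w; split; last exact: conj_step gw fw1.
Qed.

Lemma over_wsubst S f w :
  {in S, forall u, Defs.over S (f u)} -> Defs.over S w -> Defs.over S (wsubst f w).
Proof.
move=> fS; elim: w => [|[a b] w IH] //= /andP [aS Sw].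
by rewrite wsubst_cons over_cat IH // andbT; case: b; rewrite ?over_winv fS.
Qed.

Lemma wsubst_fix S f w :
  {in S, forall u, W (f u) [:: (u, false)]} -> Defs.over S w -> W (wsubst f w) w.
Proof.
move=> fS; elim: w => [|[a b] w IH] //= /andP [aS Sw].
by rewrite wsubst_cons IH //; case: b; rewrite (fS a aS).
Qed.

Lemma conj_preserving_gens S L g h sigma tau : Defs.over L h ->
  {in S, forall u, W (erase L (g u)) (h ++ sigma u ++ winv h)} ->
  {in S, forall u, Defs.over S (sigma u)} -> {in S, forall u, Defs.over S (tau u)} ->
  {in S, forall u, W (wsubst sigma (tau u)) [:: (u, false)]} ->
  conj_preserving S L g.
Proof.
move=> Lh gS sigmaS tauS sigma_tau.
have g_conj w : Defs.over S w -> W (erase L (wsubst g w)) (h ++ wsubst sigma w ++ winv h).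
  elim: w => [|[a b] w IH] /=; first by rewrite weq_catV.
  move=> /andP [aS Sw]; rewrite !wsubst_cons erase_cat IH //.
  have -> : W (erase L (if b then winv (g a) else g a))
              (h ++ (if b then winv (sigma a) else sigma a) ++ winv h).
    by case: b; rewrite ?erase_winv gS // !winv_cat winvK -catA.
  by rewrite -!catA (catA (winv h)) weq_Vcat.
exists h; split=> //; split=> [w Sw | w' Sw'].
  by exists (wsubst sigma w); split; [exact: over_wsubst | exact: g_conj].
exists (wsubst tau w'); split; first exact: over_wsubst.
by rewrite g_conj ?over_wsubst // wsubst_comp (wsubst_fix sigma_tau Sw').
Qed.

Lemma conj_preserving_inner S L g h : Defs.over L h ->
  {in S, forall u, W (erase L (g u)) (h ++ [:: (u, false)] ++ winv h)} ->
  conj_preserving S L g.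
Proof.
move=> Lh gS; apply: (conj_preserving_gens (tau := fun u => [:: (u, false)]) Lh gS).
- by move=> u uS /=; rewrite uS.
- by move=> u uS /=; rewrite uS.
- by move=> u uS.
Qed.

Lemma conj_preserving_stable S L g g' : S \subset L ->
  {in S, forall u, Defs.over S (g u)} -> {in S, forall u, Defs.over S (g' u)} ->
  {in S, forall u, W (wsubst g (g' u)) [:: (u, false)]} ->
  conj_preserving S L g.
Proof.
move=> SL gS g'S gg'.
apply: (@conj_preserving_gens S L g [::] g g' isT _ gS g'S gg') => // u uS.
by rewrite /= cats0 erase_id //; apply: over_sub SL (gS u uS).
Qed.

Lemma conj_preserving_erase_id S L g :
  {in S, forall u, erase L (g u) = [:: (u, false)]} -> conj_preserving S L g.
Proof. by move=> gS; apply: (conj_preserving_inner (h := [::])) => // u uS; rewrite gS. Qed.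

End Projection.

Section ElementaryAutomorphisms.
Variables (T : finType) (e : rel T).
Hypotheses (e_sym : symmetric e) (e_irr : irreflexive e).
Local Notation W := (weq e).
Implicit Types (f g : T -> word T) (C S L : {set T}).

Lemma transvection_adj_commute g v w : vle e v w ->
  (forall u, u != v -> g u = [:: (u, false)]) ->
  (forall p, p \in g v -> p.1 \in [set v; w]) -> adj_commute e g.
Proof.
move=> vw g_id g_v.
have key a c : e a c -> c != v -> wcommute e (g a) (g c).
  move=> Eac Ncv; rewrite (g_id c Ncv); apply: wcommute_all => p q pa.
  rewrite mem_seq1 => /eqP-> /=.
  have [Eav|Nav] := eqVneq a v; last first.
    by move: pa; rewrite g_id // inE => /eqP-> /=; rewrite in_st Eac orbT.
  subst a; case/set2P: (g_v p pa) => ->; last exact: vle_st vw Eac.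
  by rewrite in_st Eac orbT.
move=> a c Eac; have [Ecv|] := eqVneq c v; last exact: key.
apply/wcommute_sym/key; first by rewrite e_sym.
by apply: contraTneq Eac => ->; rewrite Ecv e_irr.
Qed.

Lemma partial_conj_adj_commute v C b : C \subset ~: st e v ->
  (forall a c, a \in C -> connect (erestr e (st e v)) a c -> c \in C) ->
  adj_commute e (fun u => if u \in C then [:: (v, b); (u, false); (v, ~~ b)]
                          else [:: (u, false)]).
Proof.
move=> /subsetP C_off C_closed.
have off_st a : a \in C -> a \notin st e v by move/C_off; rewrite inE.
have key a c : e a c -> a \in C -> c \notin C ->
    wcommute e [:: (v, b); (a, false); (v, ~~ b)] [:: (c, false)].
  move=> Eac aC cC; have Evc : e v c.
    have : c \in st e v.
      apply: contraR cC => cS; apply: (C_closed a) => //.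
      by apply: connect1; rewrite /erestr Eac off_st.
    rewrite in_st => /orP [/eqP Ecv|//]; subst c.
    by have := off_st a aC; rewrite in_st e_sym Eac orbT.
  apply: wcommute_all => p q pP; rewrite mem_seq1 => /eqP-> /=.
  by rewrite !inE in pP; case/or3P: pP => /eqP-> /=; rewrite in_st ?Evc ?Eac orbT.
move=> a c Eac.
have ac : wcommute e [:: (a, false)] [:: (c, false)].
  by apply: wcommute_letter; rewrite in_st Eac orbT.
case: ifP => aC; case: ifP => cC //.
- exact (wcommute_conj [:: (v, b)] ac).
- by apply: key; rewrite ?cC.
- by apply/wcommute_sym/key; rewrite 1?e_sym ?aC.
Qed.

Lemma elem_aut_adj_commute g : elem_aut e g -> adj_commute e g.
Proof.
case=> [v w b vw _|v w b vw _|v C b C_off C_closed].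
1,2: by apply: (transvection_adj_commute vw) => [u /negbTE->|p];
       rewrite ?eqxx // !inE => /orP [] /eqP-> /=; rewrite eqxx ?orbT.
exact: partial_conj_adj_commute.
Qed.

Lemma elem_aut_kills L g : down_closed e L -> elem_aut e g -> kills_outside e L g.
Proof.
move=> L_down; case=> [v w b vw _|v w b vw _|v C b _ _] u uL.
1,2: case: eqVneq uL => [-> vL|_ uL]; rewrite /erase /= ?(negbTE uL) //;
     by rewrite (negbTE vL) (negbTE (contra (L_down _ _ vw) vL)).
case: ifP => _; rewrite /erase /= (negbTE uL) //.
by case: (v \in L); rewrite ?weq_cancel.
Qed.

Lemma elem_aut_inv g : elem_aut e g -> exists g',
  (forall u, W (wsubst g (g' u)) [:: (u, false)]) /\
  (forall X u, Defs.over X (g' u) = Defs.over X (g u)).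
Proof.
case=> [v w b _ Nvw|v w b _ Nvw|v C b C_off _].
- exists (fun u => if u == v then [:: (w, ~~ b); (v, false)] else [:: (u, false)]).
  split=> [u|X u]; last by case: ifP.
  case: (eqVneq u v) => [->|Nuv]; rewrite /wsubst /= ?eqxx ?(negbTE Nuv) //.
  by rewrite eq_sym (negbTE Nvw); case: b; rewrite /= ?weq_cancel ?weq_cancelV.
- exists (fun u => if u == v then [:: (v, false); (w, ~~ b)] else [:: (u, false)]).
  split=> [u|X u]; last by case: ifP.
  case: (eqVneq u v) => [->|Nuv]; rewrite /wsubst /= ?eqxx ?(negbTE Nuv) //.
  by rewrite eq_sym (negbTE Nvw); case: b; rewrite /= ?weq_cancel ?weq_cancelV.
- have vC : v \notin C by apply/negP => /(subsetP C_off); rewrite in_setC in_st eqxx.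
  exists (fun u => if u \in C then [:: (v, ~~ b); (u, false); (v, b)] else [:: (u, false)]).
  split=> [u|X u]; last by case: ifP.
  case: ifP => uC; rewrite /wsubst /= ?uC // (negbTE vC) /=.
  by case: b; rewrite /= ?weq_cancel ?weq_cancelV.
Qed.

Lemma elem_aut_conj_preserving_stable S L g : S \subset L -> elem_aut e g ->
  {in S, forall u, Defs.over S (g u)} -> conj_preserving e S L g.
Proof.
move=> SL /elem_aut_inv [g' [gg' g'_over]] gS.
by apply: (conj_preserving_stable SL gS _ (fun u _ => gg' u)) => u uS; rewrite g'_over gS.
Qed.

Lemma aut0_adj_commute f : aut0 e f -> adj_commute e f.
Proof.
elim=> {f} [|f g _ fE /elem_aut_adj_commute gE] a c Eac.
  by apply: wcommute_letter; rewrite in_st Eac orbT.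
by rewrite /wcommute -!wsubst_cat; apply: wsubst_weq; last exact: gE.
Qed.

Lemma aut0_kills L f : down_closed e L -> aut0 e f -> kills_outside e L f.
Proof.
move=> L_down; elim=> {f} [|f g af fL eg].
  by move=> u uL; rewrite /erase /= (negbTE uL).
apply: kills_outside_comp => //; first exact: aut0_adj_commute.
exact: elem_aut_kills.
Qed.

Definition up_closed_in S L := forall v w, v \in S -> w \in L :\: S -> ~~ vle e v w.

Definition one_component_off_star S L := forall v, v \in L :\: S ->
  exists r, {in S, forall u, u \notin st e v -> connect (erestr e (st e v)) r u}.

Lemma partial_conj_conj_preserving S L v C b : S \subset L -> one_component_off_star S L ->
  C \subset ~: st e v ->
  (forall a c, a \in C -> connect (erestr e (st e v)) a c -> c \in C) ->
  conj_preserving e S L (fun u => if u \in C then [:: (v, b); (u, false); (v, ~~ b)]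
                                  else [:: (u, false)]).
Proof.
move=> SL S_conn C_off C_closed.
have stable := elem_aut_conj_preserving_stable SL (partconj b C_off C_closed).
have SLu u : u \in S -> u \in L by apply/subsetP.
have [vS|vNS] := boolP (v \in S).
  by apply: stable => u uS; case: ifP => _ /=; rewrite ?uS ?vS.
have [vL|vNL] := boolP (v \in L); last first.
  apply: conj_preserving_erase_id => u uS.
  by case: ifP => _; rewrite /erase /= ?(negbTE vNL) (SLu u uS).
have [r r_conn] := S_conn v (introT setDP (conj vL vNS)).
have [rC|rNC] := boolP (r \in C); last first.
  apply: stable => u uS; case: ifP => uC /=; rewrite ?uS // andbT.
  have uNst : u \notin st e v by have := subsetP C_off u uC; rewrite inE.
  have := r_conn u uS uNst; rewrite (sym_connect_sym (erestr_sym e_sym _)).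
  by move/(C_closed u r uC); rewrite (negbTE rNC).
(* Now C contains every vertex of S outside st v, and the others commute with v. *)
apply: (conj_preserving_inner (h := [:: (v, b)])); first by rewrite /= vL.
move=> u uS; case: ifP => uC; first by rewrite /erase /= vL (SLu u uS).
have Evu : e v u.
  have : u \in st e v.
    by apply: contraFT uC => uNst; apply: (C_closed r) => //; exact: r_conn.
  by rewrite in_st => /orP [/eqP Euv|//]; rewrite -Euv uS in vNS.
rewrite /erase /= (SLu u uS); symmetry.
exact (weq_trans (weq_comm [::] [:: (v, ~~ b)] b false Evu)
                 (weq_catl [:: (u, false)] (weq_cancel e v b [::]))).
Qed.

Lemma elem_aut_conj_preserving S L g : S \subset L -> up_closed_in S L ->
  one_component_off_star S L -> elem_aut e g -> conj_preserving e S L g.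
Proof.
move=> SL S_up S_conn eg; have stable := elem_aut_conj_preserving_stable SL eg.
case: eg stable => [v w b vw _|v w b vw _|v C b C_off C_closed] stable; last first.
  exact: partial_conj_conj_preserving.
all: have [wS|wNS] := boolP (w \in S);
       first by apply: stable => u uS; case: eqP => [<-|_] /=; rewrite ?uS ?wS.
all: have [vS|vNS] := boolP (v \in S); last by apply: stable => u uS;
       case: eqP => [Euv|_]; [rewrite -Euv uS in vNS | rewrite /= uS].
all: have wNL : w \notin L by apply: contraL vw => wL; apply: S_up vS _; rewrite inE wL wNS.
all: by apply: conj_preserving_erase_id => u uS; case: eqP => [->|_];
       rewrite /erase /= ?(negbTE wNL) ?(subsetP SL v vS) ?(subsetP SL u uS).
Qed.

Lemma aut0_conj_preserving S L f : S \subset L -> down_closed e L -> up_closed_in S L ->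
  one_component_off_star S L -> aut0 e f -> conj_preserving e S L f.
Proof.
move=> SL L_down S_up S_conn; elim=> {f} [|f g af fS eg].
  exact: conj_preserving_id.
apply: conj_preserving_comp => //; first exact: aut0_adj_commute.
  exact: aut0_kills.
exact: elem_aut_conj_preserving.
Qed.

End ElementaryAutomorphisms.

Section MinimalSIL.
Variables (T : finType) (e : rel T).
Hypotheses (e_sym : symmetric e) (e_irr : irreflexive e)
  (hab : forall u : T, abelian_class e u).
Local Notation vle := (vle e).
Local Notation lk := (lk e).
Local Notation st := (st e).
Local Notation vclass := (vclass e).
Local Notation SIL := (SIL e).
Local Notation erestr := (erestr e).
Local Notation GammaS := (GammaS e).
Local Notation GammaLeS := (GammaLeS e).

Lemma connect_erestr_notin X a b : connect (erestr X) a b -> a \notin X -> b \notin X.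
Proof.
move=> ab aX; apply: (connect_invariant (P := fun c => c \notin X) aX _ ab).
by move=> c d _ /and3P [].
Qed.

Lemma in_vclass x u : (u \in vclass x) = vle x u && vle u x.
Proof. by rewrite inE. Qed.

Lemma vclass_refl x : x \in vclass x.
Proof. by rewrite in_vclass vle_refl. Qed.

Lemma vclass_adj x u : u \in vclass x -> u != x -> e x u.
Proof. by move=> ux Nux; apply: hab (vclass_refl x) ux _; rewrite eq_sym. Qed.

Lemma vle_nadj v x t : vle v x -> t != x -> ~~ e x t -> ~~ e v t.
Proof.
move=> vx Ntx Nxt; apply/negP => /(vle_st vx).
by rewrite in_st (negbTE Ntx) (negbTE Nxt).
Qed.

Lemma in_GammaS x y z u :
  (u \in GammaS x y z) = [|| u \in vclass x, u \in vclass y | u \in vclass z].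
Proof. by rewrite !in_setU orbA. Qed.

Lemma in_GammaLeS x y z u : (u \in GammaLeS x y z) = [|| vle u x, vle u y | vle u z].
Proof. by rewrite inE. Qed.

Lemma GammaS_swap x y z : GammaS y x z = GammaS x y z.
Proof. by rewrite /Defs.GammaS (setUC (vclass y)). Qed.

Lemma notin_GammaS_neq x y z v : v \notin GammaS x y z -> [/\ v != x, v != y & v != z].
Proof.
rewrite in_GammaS !negb_or => /and3P [vNx vNy vNz].
by split; [move: vNx | move: vNy | move: vNz]; apply: contraNneq => ->; exact: vclass_refl.
Qed.

Lemma GammaS_sub_GammaLeS x y z : GammaS x y z \subset GammaLeS x y z.
Proof.
by apply/subsetP => u; rewrite in_GammaS in_GammaLeS !in_vclass => /or3P [] /andP [_ ->];
  rewrite ?orbT.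
Qed.

Lemma GammaLeS_down_closed x y z : down_closed e (GammaLeS x y z).
Proof.
move=> u w uw; rewrite !in_GammaLeS.
by case/or3P => /(vle_trans e_sym uw) ->; rewrite ?orbT.
Qed.

Lemma SIL_sym x y z : SIL x y z -> SIL y x z.
Proof.
case=> /and3P [Nxy Nxz Nyz] /and3P [Exy Exz Eyz] Cx Cy.
by split; rewrite 1?setIC // 1?eq_sym 1?e_sym ?Nxy ?Nxz ?Nyz ?Exy ?Exz ?Eyz.
Qed.

Lemma SIL_le_third x y z v : SIL x y z -> vle v z -> v != x -> v != y -> SIL x y v.
Proof.
case=> /and3P [Nxy Nxz Nyz] /and3P [Exy Exz Eyz] Cx Cy vz Nvx Nvy.
have Evx : ~~ e v x by apply: vle_nadj vz Nxz _; rewrite e_sym.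
have Evy : ~~ e v y by apply: vle_nadj vz Nyz _; rewrite e_sym.
have zL : z \notin lk x :&: lk y by rewrite !inE negb_and Exz.
have sep t : t != v -> ~~ connect (erestr (lk x :&: lk y)) z t ->
             ~~ connect (erestr (lk x :&: lk y)) v t.
  move=> Ntv; apply: contraNN => vt; have Nvt : v != t by rewrite eq_sym.
  have [c [/and3P [Evc _ cL] ct]] := connect_first vt Nvt.
  have := vle_st vz Evc; rewrite in_st => /orP [/eqP Ecz|Ezc]; first by rewrite -Ecz.
  by apply: connect_trans ct; apply: connect1; rewrite /erestr Ezc zL cL.
split; first by rewrite Nxy eq_sym Nvx eq_sym Nvy.
- by rewrite Exy (e_sym x v) Evx (e_sym y v) Evy.
- by rewrite sep // eq_sym.
- by rewrite sep // eq_sym.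
Qed.

Lemma SIL_reach_not_st x y z c : SIL x y z ->
  connect (erestr (lk x :&: lk y)) z c -> c \notin st x.
Proof.
case=> _ /and3P [_ Exz _] Cx _ zc; rewrite in_st negb_or.
have Ncx : c != x by apply: contraNneq Cx => Ecx; subst c.
have cL : c \notin lk x :&: lk y.
  by apply: connect_erestr_notin zc _; rewrite !inE negb_and Exz.
rewrite Ncx /=; apply: contraNN Cx => Exc; apply: connect_rcons zc _.
by rewrite /erestr e_sym Exc cL !inE e_irr.
Qed.

Lemma SIL_reach_off_star x y z v c : SIL x y z -> vle v x -> v != z ->
  connect (erestr (lk x :&: lk y)) z c -> c \notin st v /\ connect (erestr (st v)) z c.
Proof.
move=> sil vx Nvz zc; have [/and3P [_ Nxz _] /and3P [_ Exz _] _ _] := sil.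
pose P c := [/\ connect (erestr (lk x :&: lk y)) z c, c \notin st v &
                connect (erestr (st v)) z c].
suff [] : P c by [].
apply: (connect_invariant (P := P) _ _ zc).
  by split; rewrite // in_st negb_or eq_sym Nvz (vle_nadj vx) // eq_sym.
move=> a b [za aNst za'] /and3P [Eab aL bL].
have zb : connect (erestr (lk x :&: lk y)) z b.
  by apply: connect_rcons za _; rewrite /erestr Eab aL.
have bNst : b \notin st v.
  rewrite in_st negb_or; apply/andP; split.
    by apply: contraNneq aNst => Ebv; rewrite in_st -Ebv e_sym Eab orbT.
  by apply: contraNN (SIL_reach_not_st sil zb); apply: vle_st.
by split=> //; apply: connect_rcons za' _; rewrite /erestr Eab aNst.
Qed.

Lemma SIL_le_first x y z v : SIL x y z -> vle v x -> v != y -> v != z -> ~ SIL v y z ->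
  exists a, [/\ a \in lk x :&: lk y, ~~ e v a & connect (erestr (st v)) z a].
Proof.
move=> sil vx Nvy Nvz notSIL.
have [/and3P [Nxy Nxz Nyz] /and3P [Exy Exz Eyz] _ Cy] := sil.
have Evy : ~~ e v y by apply: vle_nadj vx _ Exy; rewrite eq_sym.
have Evz : ~~ e v z by apply: vle_nadj vx _ Exz; rewrite eq_sym.
have zL : z \notin lk x :&: lk y by rewrite !inE negb_and Exz.
set G := exists a, _.
(* On a path from z off lk v :&: lk y, the first vertex in lk x :&: lk y is a witness:
   up to that vertex the path stays in the component of z off st v. *)
pose P t := G \/ connect (erestr (lk x :&: lk y)) z t.
have reach t : connect (erestr (lk v :&: lk y)) z t -> P t.
  apply: connect_invariant; first by right.
  move=> c d [|zc]; first by left.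
  case/and3P => Ecd _ dL'; have cNL := connect_erestr_notin zc zL.
  have [dL|dNL] := boolP (d \in lk x :&: lk y); last first.
    by right; apply: connect_rcons zc _; rewrite /erestr Ecd dNL cNL.
  have [cNst zc'] := SIL_reach_off_star sil vx Nvz zc.
  have Nvd : ~~ e v d by move: dL dL'; rewrite !inE => /andP [_ ->]; rewrite andbT.
  left; exists d; split=> //; apply: connect_rcons zc' _.
  rewrite /erestr Ecd cNst in_st negb_or Nvd andbT /=.
  by apply: contraNneq Evy => <-; move: dL; rewrite !inE (e_sym d) => /andP [].
have : connect (erestr (lk v :&: lk y)) z v || connect (erestr (lk v :&: lk y)) z y.
  apply/negPn/negP; rewrite negb_or => /andP [Cv' Cy']; apply: notSIL.
  by split=> //; apply/and3P.
case/orP => /reach [//|zt].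
  by have [] := SIL_reach_off_star sil vx Nvz zt; rewrite in_st eqxx.
by rewrite zt in Cy.
Qed.

Lemma SIL_GammaS_reach x y z v a : SIL x y z -> vle v x -> v \notin GammaS x y z ->
  a \in lk x :&: lk y -> ~~ e v a -> connect (erestr (st v)) z a ->
  {in GammaS x y z, forall u, u \notin st v -> connect (erestr (st v)) z u}.
Proof.
move=> [/and3P [Nxy Nxz _] /and3P [Exy Exz _] _ _] vx vNS aL Nva za u uS uNst.
have [Nvx Nvy Nvz] := notin_GammaS_neq vNS.
have Evy : ~~ e v y by apply: vle_nadj vx _ Exy; rewrite eq_sym.
have Evz : ~~ e v z by apply: vle_nadj vx _ Exz; rewrite eq_sym.
move: aL; rewrite !inE => /andP [Exa Eya].
have aNst : a \notin st v.
  by rewrite in_st negb_or Nva andbT; apply: contraNneq Evy => <-; rewrite e_sym.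
have yNst : y \notin st v by rewrite in_st negb_or Evy eq_sym Nvy.
have zNst : z \notin st v by rewrite in_st negb_or Evz eq_sym Nvz.
have zy : connect (erestr (st v)) z y.
  by apply: connect_rcons za _; rewrite /erestr e_sym Eya aNst.
have via t : connect (erestr (st v)) z t -> t \notin st v -> u \in vclass t ->
    connect (erestr (st v)) z u.
  move=> zt tNst ut; have [-> //|Nut] := eqVneq u t.
  by apply: connect_rcons zt _; rewrite /erestr (vclass_adj ut Nut) tNst.
move: uS; rewrite in_GammaS => /or3P [ux|uy|uz]; last 2 first.
- exact: via zy yNst uy.
- exact: via (connect0 _ z) zNst uz.
have xNst : x \notin st v.
  rewrite in_st negb_or eq_sym Nvx /=; apply/negP => Evx.
  move: (ux); rewrite in_vclass => /andP [xu _].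
  have := vle_st xu (etrans (e_sym x v) Evx); rewrite in_st => /orP [/eqP Evu|Euv].
    by rewrite in_GammaS Evu ux in vNS.
  by rewrite in_st e_sym Euv orbT in uNst.
apply: (via x _ xNst ux); apply: connect_rcons za _.
by rewrite /erestr e_sym Exa aNst.
Qed.

Definition below u := [set w | vle w u].

Definition SIL_weight x y z := #|below x| + #|below y| + #|below z|.

Definition minSIL x y z := SIL x y z /\
  forall x' y' z', SIL x' y' z' -> SIL_weight x y z <= SIL_weight x' y' z'.

Lemma card_below_lt v a : vle v a -> ~~ vle a v -> #|below v| < #|below a|.
Proof.
move=> va Nav; apply/proper_card/properP; split.
  by apply/subsetP => w; rewrite !inE => /vle_trans; apply.
by exists a; rewrite !inE ?vle_refl.
Qed.

Definition SILb x y z : bool :=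
  [&& [&& x != y, x != z & y != z], [&& ~~ e x y, ~~ e x z & ~~ e y z],
      ~~ connect (erestr (lk x :&: lk y)) z x & ~~ connect (erestr (lk x :&: lk y)) z y].

Lemma SILP x y z : reflect (SIL x y z) (SILb x y z).
Proof. by apply: (iffP and4P) => -[]. Qed.

Lemma minSIL_exists : (exists x y z, SIL x y z) -> exists x y z, minSIL x y z.
Proof.
move=> [x [y [z sil]]].
pose has_weight n :=
  [exists t : T * T * T, SILb t.1.1 t.1.2 t.2 && (SIL_weight t.1.1 t.1.2 t.2 == n)].
have : exists n, has_weight n.
  by exists (SIL_weight x y z); apply/existsP; exists (x, y, z); rewrite eqxx andbT; apply/SILP.
case/ex_minnP => m /existsP [[[x' y'] z'] /andP [/SILP sil' /eqP <-]] min_m.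
exists x', y', z'; split=> // a b c sil_abc; apply: min_m.
by apply/existsP; exists (a, b, c); rewrite eqxx andbT; apply/SILP.
Qed.

Lemma minSIL_sym x y z : minSIL x y z -> minSIL y x z.
Proof.
case=> sil min_xyz; split; first exact: SIL_sym.
by move=> a b c sil_abc; rewrite /SIL_weight (addnC #|below y|); apply: min_xyz.
Qed.

Lemma minSIL_not_le_third x y z v : minSIL x y z -> v \notin GammaS x y z -> ~~ vle v z.
Proof.
move=> [sil min_xyz] vNS; have [Nvx Nvy _] := notin_GammaS_neq vNS.
apply/negP => vz; have := min_xyz _ _ _ (SIL_le_third sil vz Nvx Nvy).
rewrite /SIL_weight leq_add2l leqNgt card_below_lt //.
by apply: contraNN vNS => zv; rewrite in_GammaS !in_vclass zv vz !orbT.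
Qed.

Lemma minSIL_le_first x y z v : minSIL x y z -> v \notin GammaS x y z -> vle v x ->
  exists a, [/\ a \in lk x :&: lk y, ~~ e v a & connect (erestr (st v)) z a].
Proof.
move=> [sil min_xyz] vNS vx; have [_ Nvy Nvz] := notin_GammaS_neq vNS.
apply: (SIL_le_first sil vx Nvy Nvz) => sil'.
have := min_xyz _ _ _ sil'; rewrite /SIL_weight !leq_add2r leqNgt card_below_lt //.
by apply: contraNN vNS => xv; rewrite in_GammaS in_vclass xv vx.
Qed.

Lemma minSIL_le_first_not_above x y z w v : minSIL x y z -> w \notin GammaS x y z ->
  vle w x -> v \in GammaS x y z -> ~~ vle v w.
Proof.
move=> minS wNS wx vS; apply/negP => vw.
have [[/and3P [Nxy _ _] /and3P [Exy Exz _] _ _] _] := minS.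
have [a [aL Nwa za]] := minSIL_le_first minS wNS wx.
move: aL; rewrite !inE => /andP [Exa Eya].
move: vS; rewrite in_GammaS !in_vclass => /or3P [] /andP [tv _];
  have tw := vle_trans e_sym tv vw.
- by move: wNS; rewrite in_GammaS in_vclass tw wx.
- have := vle_st tw Eya; rewrite in_st (negbTE Nwa) orbF => /eqP Eaw.
  have Nyx : y != x by rewrite eq_sym.
  by move: (vle_nadj wx Nyx Exy); rewrite -Eaw e_sym Eya.
- have Nza : z != a by apply: contraNneq Exz => ->.
  have [c [/and3P [Ezc _ cNst] _]] := connect_first za Nza.
  by rewrite (vle_st tw Ezc) in cNst.
Qed.

Lemma GammaS_up_closed x y z : minSIL x y z -> up_closed_in e (GammaS x y z) (GammaLeS x y z).
Proof.
move=> minS v w vS /setDP [+ wNS]; rewrite in_GammaLeS => /or3P [wx|wy|wz].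
- exact: minSIL_le_first_not_above minS wNS wx vS.
- by apply: minSIL_le_first_not_above (minSIL_sym minS) _ wy _; rewrite GammaS_swap.
- by rewrite (negbTE (minSIL_not_le_third minS wNS)) in wz.
Qed.

Lemma GammaS_one_component x y z :
  minSIL x y z -> one_component_off_star e (GammaS x y z) (GammaLeS x y z).
Proof.
move=> minS v /setDP [+ vNS]; rewrite in_GammaLeS => /or3P [vx|vy|vz]; exists z.
- have [a [aL Nva za]] := minSIL_le_first minS vNS vx.
  exact: SIL_GammaS_reach minS.1 vx vNS aL Nva za.
- rewrite -GammaS_swap in vNS *.
  have [a [aL Nva za]] := minSIL_le_first (minSIL_sym minS) vNS vy.
  exact: SIL_GammaS_reach (SIL_sym minS.1) vy vNS aL Nva za.
- by rewrite (negbTE (minSIL_not_le_third minS vNS)) in vz.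
Qed.

End MinimalSIL.

Theorem proposition3p9 (T : finType) (e : rel T)
  (e_sym : symmetric e) (e_irr : irreflexive e)
  (hab : forall u : T, abelian_class e u) :
  (exists x y z : T, SIL e x y z) ->
  exists x y z : T, special_SIL e x y z.
Proof.
move=> hasSIL; have [x [y [z minS]]] := minSIL_exists hasSIL.
exists x, y, z; split; [exact: minS.1 | exact: hab | exact: hab | exact: hab |].
move=> phi aut_phi; change (conj_preserving e (GammaS e x y z) (GammaLeS e x y z) phi).
apply: (aut0_conj_preserving e_sym e_irr (GammaS_sub_GammaLeS e x y z) _ _ _ aut_phi).
- exact: GammaLeS_down_closed.
- exact (GammaS_up_closed e_sym e_irr minS).
- exact (GammaS_one_component e_sym e_irr hab minS).
Qed.
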